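(* Under the standing assumptions of the context, for every integer $\ell\ge1$ the limits $\lambda_\ell(x,\infty,1/2)$ and $\Lambda_\ell(x,\infty,1/2)$ exist and \[ \lambda_\ell(x,\infty,1/2)=d(\mathcal K_\ell),\qquad \Lambda_\ell(x,\infty,1/2)=\sum_{l=\ell}^\infty d(\mathcal K_l)>0; \] moreover, $d(\mathcal K_\ell)>0$ for infinitely many $\ell$.
   Context: Standing assumptions: $A=\{0,1\}$, $\Sigma=A^{\mathbb N_0}$ with metric $\rho(y,z)=2^{-\min\{i\ge0:\,y_i\ne z_i\}}$ ($y\ne z$) and shift $\sigma$. $\zeta:A\to A^*$ is a binary substitution of constant length $q\ge2$, primitive, aperiodic (its subshift $X_\zeta$ contains a non-$\sigma$-periodic sequence), with $\zeta(0)$ starting with $0$; $x=\lim_k\zeta^k(0)$ its fixed point starting with $0$. For $n\in\mathbb N\cup\{\infty\}$, $n\ge2$, the recurrence plot $R(x,n,1/2)$ has indices $0\le i,j<n$ and entry $1$ iff $x_i=x_j$. A line of length $\ell$: $(i,j,\ell)$ with $0\le i,j\le n-\ell$, $i\ne j$, entries $(i+k,j+k)=1$ for $0\le k<\ell$, entry $(i-1,j-1)=0$ if $\min\{i,j\}>0$, entry $(i+\ell,j+\ell)=0$ if $\max\{i,j\}<n-\ell$; for $n=\infty$ it is inner if $\min\{i,j\}>0$. For finite $n$: $N_\ell$ = number of all lines of length exactly $\ell$, $\lambda_\ell(x,n,1/2)=N_\ell/(n^2-n)$, $\Lambda_\ell=\sum_{l\ge\ell}\lambda_l$; values at $n=\infty$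 are limits as $n\to\infty$. $\mathcal K_l=\{(i,j)\in\mathbb N^2:(i,j,l)\text{ inner line in }R(x,\infty,1/2)\}$; $d(M)=\lim_n n^{-2}\#(M\cap[0,n)^2)$, known to exist for $M=\mathcal K_l$. *)

From mathcomp Require Import all_boot.
From Stdlib Require Import Reals.
From Coquelicot Require Import Coquelicot.

Set Implicit Arguments.
Unset Strict Implicit.
Unset Printing Implicit Defensive.
Local Open Scope nat_scope.

(* Alphabet A = {0,1} is encoded as bool with 0 = false, 1 = true. *)
Definition subst := bool -> seq bool.

Definition apply_subst (z : subst) (w : seq bool) : seq bool := flatten (map z w).

Definition iter_subst (z : subst) (k : nat) (w : seq bool) : seq bool :=
  iter k (apply_subst z) w.

Definition constant_length (z : subst) (q : nat) : Prop := forall a, size (z a) = q.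

Definition subst_primitive (z : subst) : Prop :=
  exists k : nat, (0 < k)%N /\ forall a b : bool, b \in iter_subst z k [:: a].

Definition in_language (z : subst) (w : seq bool) : Prop :=
  exists (k : nat) (a : bool), infix w (iter_subst z k [:: a]).

Definition in_subshift (z : subst) (y : nat -> bool) : Prop :=
  forall i n : nat, in_language z (mkseq (fun t => y (i + t)%N) n).

Definition sigma_periodic (y : nat -> bool) : Prop :=
  exists p : nat, (0 < p)%N /\ forall t, y (t + p)%N = y t.

Definition subst_aperiodic (z : subst) : Prop :=
  exists y : nat -> bool, in_subshift z y /\ ~ sigma_periodic y.

Definition is_fixed_point_limit (z : subst) (x : nat -> bool) : Prop :=
  forall i, exists K, forall k, (K <= k)%N ->
    (i < size (iter_subst z k [:: false]))%N /\
    nth false (iter_subst z k [:: false]) i = x i.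

(* entry (i,j) of the recurrence plot R(x, n, 1/2) is 1 iff x_i = x_j *)
Definition rp (x : nat -> bool) (i j : nat) : bool := x i == x j.

Definition is_line (x : nat -> bool) (n i j l : nat) : bool :=
  [&& (i <= n - l)%N, (j <= n - l)%N, l <= n, i != j,
      seq.all (fun k => rp x (i + k) (j + k)) (seq.iota 0 l),
      implb (0 < minn i j)%N (~~ rp x i.-1 j.-1) &
      implb (maxn i j < n - l)%N (~~ rp x (i + l) (j + l))].

Definition N_lines (x : nat -> bool) (n l : nat) : nat :=
  \sum_(i < n) \sum_(j < n) is_line x n i j l.

Definition rqa_lambda (x : nat -> bool) (n l : nat) : R :=
  INR (N_lines x n l) / INR (n * n - n).

(* Lambda_l = sum_{l' >= l} lambda_{l'}; lines have length <= n, so the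
   sum over l' = l, ..., l + n contains all nonzero terms. *)
Definition rqa_Lambda (x : nat -> bool) (n l : nat) : R :=
  sum_n (fun k => rqa_lambda x n (l + k)) n.

Definition in_K (x : nat -> bool) (l i j : nat) : bool :=
  [&& (0 < i)%N, (0 < j)%N, i != j,
      seq.all (fun k => rp x (i + k) (j + k)) (seq.iota 0 l),
      ~~ rp x i.-1 j.-1 &
      ~~ rp x (i + l) (j + l)].

Definition density_K (x : nat -> bool) (l n : nat) : R :=
  INR (\sum_(i < n) \sum_(j < n) in_K x l i j) / INR (n * n).

(* The difference between the proportions of the letter 0 in [zeta^k(0)] and in
   [zeta^k(1)] is multiplicative in [k], and primitivity makes it of modulus
   [< 1] for some [k]; hence it tends to [0].
   Cutting [x] into the blocks [zeta^k(x_t)] squeezes the occurrence ratio of a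
   word [w] between two bounds whose gap is the analogous difference for [w],
   which is dominated by the one for the letter 0, so every word has a
   frequency; factors of [x] recur with bounded gaps, so their frequencies are
   positive.

   Inner runs of length at least [l] start exactly at pairs of positions where
   windows of length [l + 1] differ in their first letter and agree afterwards,
   so their density is [S_l = sum_(u,v) [branch l u v] freq u freq v] and
   [d(K_l) = S_l - S_(l+1)]; lines of the finite plots differ from these runs in
   [O(n l)] cells only.  Runs of length [>= l] on one diagonal occupy disjoint
   cells, so [S_l <= 1/l] and the series of the [d(K_l)] telescopes to [S_l].
   Finally [x] is not eventually periodic, so it has left special factors of
   every length; extended to the right until they separate they give pairs of
   positive frequency producing runs of length exactly [l], for arbitrarily
   large [l]. *)

From mathcomp Require Import all_boot zify.
From Stdlib Require Import Reals Lra Classical.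
From Coquelicot Require Import Coquelicot.

Set Implicit Arguments.
Unset Strict Implicit.
Unset Printing Implicit Defensive.
Local Open Scope nat_scope.

Section Substitution.
Variables (z : subst) (q : nat).
Hypothesis z_const : constant_length z q.

Lemma apply_subst_cat s1 s2 :
  apply_subst z (s1 ++ s2) = apply_subst z s1 ++ apply_subst z s2.
Proof. by rewrite /apply_subst map_cat flatten_cat. Qed.

Lemma iter_subst_cat k s1 s2 :
  iter_subst z k (s1 ++ s2) = iter_subst z k s1 ++ iter_subst z k s2.
Proof.
elim: k => [//|k IH].
by rewrite /iter_subst !iterS -!/(iter_subst _ _ _) IH apply_subst_cat.
Qed.

Lemma iter_substD k j s : iter_subst z (k + j) s = iter_subst z k (iter_subst z j s).
Proof. by rewrite /iter_subst iterD. Qed.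

Lemma size_apply_subst s : size (apply_subst z s) = q * size s.
Proof.
elim: s => [|c s IH]; first by rewrite muln0.
by rewrite -cat1s apply_subst_cat size_cat IH /apply_subst /= cats0 z_const mulnS.
Qed.

Lemma size_iter_subst k s : size (iter_subst z k s) = expn q k * size s.
Proof.
elim: k => [|k IH]; first by rewrite expn0 mul1n.
by rewrite /iter_subst iterS -/(iter_subst _ _ _) size_apply_subst IH expnS mulnA.
Qed.

Lemma size_iter_subst1 k a : size (iter_subst z k [:: a]) = expn q k.
Proof. by rewrite size_iter_subst muln1. Qed.

Definition znth k a r := nth false (iter_subst z k [:: a]) r.

Lemma nth_iter_subst k s t r : t < size s -> r < expn q k ->
  nth false (iter_subst z k s) (t * expn q k + r) = znth k (nth false s t) r.
Proof.
elim: s t => [//|c s IH] [|t] /= Ht Hr.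
  by rewrite -cat1s iter_subst_cat nth_cat size_iter_subst1 mul0n add0n Hr.
rewrite -cat1s iter_subst_cat nth_cat size_iter_subst1 mulSn -addnA.
by rewrite ltnNge leq_addr /= addKn IH.
Qed.

Lemma znthD k j a s r : s < expn q j -> r < expn q k ->
  znth (k + j) a (s * expn q k + r) = znth k (znth j a s) r.
Proof. by move=> Hs Hr; rewrite /znth iter_substD nth_iter_subst ?size_iter_subst1. Qed.

Lemma fixed_point_blocks x : is_fixed_point_limit z x -> forall k t r, r < expn q k ->
  x (t * expn q k + r) = znth k (x t) r.
Proof.
move=> Hx k t r Hr.
have [K1 H1] := Hx t.
have [K2 H2] := Hx (t * expn q k + r).
have [_ <-] := H2 (k + (K1 + K2)) (leq_trans (leq_addl _ _) (leq_addl _ _)).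
have [Ht <-] := H1 (K1 + K2) (leq_addr _ _).
by rewrite iter_substD nth_iter_subst.
Qed.

End Substitution.

Lemma sum_nat_blocks (a : nat -> nat) M B :
  \sum_(0 <= i < M * B) a i = \sum_(0 <= s < M) \sum_(0 <= r < B) a (s * B + r).
Proof.
elim: M => [|M IH]; first by rewrite mul0n !big_geq.
rewrite big_nat_recr //= -IH mulSn addnC (@big_cat_nat _ _ _ (M * B)) //= ?leq_addr //.
congr (_ + _); rewrite -{1}(add0n (M * B)) big_addn addKn.
by apply: eq_bigr => i _; rewrite addnC.
Qed.

Lemma sum_nat_bool_le (f : nat -> bool) m n : \sum_(m <= i < n) f i <= n - m.
Proof.
apply: leq_trans (_ : \sum_(m <= i < n) 1 <= _); first by apply: leq_sum => i _; case: (f i).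
by rewrite sum_nat_const_nat muln1.
Qed.

Lemma sum_nat_bool_gt0 (f : nat -> bool) n r : r < n -> f r -> 0 < \sum_(0 <= i < n) f i.
Proof.
move=> Hr Hf; rewrite (big_cat_nat (leq0n r) (ltnW Hr)) [\sum_(r <= i < n) _]big_ltn //=.
by rewrite Hf addnCA add1n.
Qed.

Lemma sum_nat_bool_compl (f : nat -> bool) n :
  \sum_(0 <= i < n) (~~ f i) + \sum_(0 <= i < n) f i = n.
Proof.
rewrite -big_split /= (eq_bigr (fun _ => 1)) => [|i _]; last by case: (f i).
by rewrite sum_nat_const_nat subn0 muln1.
Qed.

Lemma sum_nat_bool_le_agree (a b : nat -> bool) B L :
  (forall r, r + L <= B -> a r = b r) ->
  \sum_(0 <= r < B) a r <= \sum_(0 <= r < B) b r + (L - 1).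
Proof.
move=> Hab; have HBL : B - (L - 1) <= B by rewrite leq_subr.
rewrite !(big_cat_nat (leq0n _) HBL) /= -addnA leq_add //.
  by apply/eq_leq; rewrite !big_nat; apply: eq_bigr => i /andP [_ Hi]; rewrite Hab //; lia.
apply: leq_trans (sum_nat_bool_le _ _ _) (leq_trans _ (leq_addl _ _)); lia.
Qed.

Definition window (F : nat -> bool) L i := mkseq (fun u => F (i + u)) L.

Definition occ (F : nat -> bool) (w : seq bool) n :=
  \sum_(0 <= i < n) (window F (size w) i == w).

Lemma occ_le F w n : occ F w n <= n.
Proof. by rewrite -[n in _ <= n]subn0 sum_nat_bool_le. Qed.

Lemma occS F w n : occ F w n.+1 = occ F w n + (window F (size w) n == w).
Proof. by rewrite /occ big_nat_recr. Qed.

Lemma occ_mono F w : {homo occ F w : n m / n <= m}.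
Proof. by move=> n m Hnm; rewrite /occ (big_cat_nat (leq0n n) Hnm) leq_addr. Qed.

Section OccurrenceBlocks.
Variables (F : nat -> bool) (Z : bool -> nat -> bool) (G : nat -> bool) (B M : nat).
Hypothesis F_blocks : forall s r, s < M -> r < B -> F (s * B + r) = Z (G s) r.
Variable w : seq bool.

Lemma window_blocks s r : s < M -> r + size w <= B ->
  window F (size w) (s * B + r) = window (Z (G s)) (size w) r.
Proof.
move=> Hs Hr; apply: (@eq_from_nth _ false) => [|u]; rewrite !size_mkseq // => Hu.
by rewrite !nth_mkseq // -addnA F_blocks //; lia.
Qed.

(* Counting occurrences block by block misses at most [size w - 1]
   occurrences per block, namely those straddling the next block. *)
Lemma occ_blocks :
  occ F w (M * B) <= \sum_(0 <= s < M) occ (Z (G s)) w B + M * (size w - 1) /\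
  \sum_(0 <= s < M) occ (Z (G s)) w B <= occ F w (M * B) + M * (size w - 1).
Proof.
have -> : M * (size w - 1) = \sum_(0 <= s < M) (size w - 1).
  by rewrite sum_nat_const_nat subn0.
rewrite /occ sum_nat_blocks -!big_split /=.
by split; rewrite !big_nat; apply: leq_sum => s /andP [_ Hs];
  apply: sum_nat_bool_le_agree => r Hr; rewrite window_blocks.
Qed.

End OccurrenceBlocks.

Lemma sum_nat_bool_split (h : bool -> nat) (G : nat -> bool) M :
  \sum_(0 <= s < M) h (G s) =
  h false * \sum_(0 <= s < M) (~~ G s) + h true * \sum_(0 <= s < M) G s.
Proof.
rewrite !big_distrr -big_split /=; apply: eq_bigr => s _.
by case: (G s); rewrite /= ?muln0 ?muln1 ?addn0.
Qed.

Lemma sum_nat_bool_comp_ge (h : bool -> nat) (G : nat -> bool) M :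
  M * minn (h false) (h true) <= \sum_(0 <= s < M) h (G s).
Proof.
rewrite -[M in M * _]subn0 -sum_nat_const_nat.
by apply: leq_sum => s _; case: (G s); [apply: geq_minr | apply: geq_minl].
Qed.

Lemma sum_nat_bool_comp_le (h : bool -> nat) (G : nat -> bool) M :
  \sum_(0 <= s < M) h (G s) <= M * maxn (h false) (h true).
Proof.
rewrite -[M in M * _]subn0 -sum_nat_const_nat.
by apply: leq_sum => s _; case: (G s); [apply: leq_maxr | apply: leq_maxl].
Qed.

Lemma leq_INR m n : m <= n -> (INR m <= INR n)%R.
Proof. by move=> /leP; apply: le_INR. Qed.

Lemma Rabs_INR_sub_le X Y E : X <= Y + E -> Y <= X + E -> (Rabs (INR X - INR Y) <= INR E)%R.
Proof.
by move=> /leq_INR H1 /leq_INR H2; rewrite !plus_INR in H1 H2; apply: Rabs_le; split; lra.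
Qed.

Lemma INR_maxn_minn a b : (INR (maxn a b) - INR (minn a b) = Rabs (INR a - INR b))%R.
Proof.
case: (leqP a b) => H; first by rewrite Rabs_minus_sym Rabs_pos_eq //; have := leq_INR H; lra.
by rewrite Rabs_pos_eq //; have := leq_INR (ltnW H); lra.
Qed.

Section LetterFrequencies.
Variables (z : subst) (q : nat).
Hypotheses (q_ge2 : 2 <= q) (z_const : constant_length z q).

Lemma expq_gt0 k : 0 < expn q k.
Proof. by rewrite expn_gt0; apply/orP; left; lia. Qed.

Definition occ_iter k w a := occ (znth z k a) w (expn q k).
Definition zeros k a := occ_iter k [:: false] a.

Lemma zerosE k a : zeros k a = \sum_(0 <= r < expn q k) (~~ znth z k a r).
Proof. by apply: eq_bigr => r _; rewrite /window /mkseq /= addn0; case: znth. Qed.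

Lemma occ_iter_le k w a : occ_iter k w a <= expn q k.
Proof. exact: occ_le. Qed.

Lemma occ_iterD k j w b :
  let approx := occ_iter k w false * zeros j b + occ_iter k w true * (expn q j - zeros j b) in
  occ_iter (k + j) w b <= approx + expn q j * (size w - 1) /\
  approx <= occ_iter (k + j) w b + expn q j * (size w - 1).
Proof.
have ones : expn q j - zeros j b = \sum_(0 <= r < expn q j) znth z j b r.
  by rewrite zerosE -{1}(sum_nat_bool_compl (znth z j b) (expn q j)) addKn.
have := @occ_blocks (znth z (k + j) b) (znth z k) (znth z j b) (expn q k) (expn q j)
  (fun s r => @znthD z q z_const k j b s r) w.
rewrite /occ_iter expnD mulnC -/(occ_iter _ _ _) (sum_nat_bool_split (occ_iter k w)).
by rewrite ones zerosE.
Qed.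

Local Open Scope R_scope.

Definition qpow k := INR (expn q k).

Lemma qpow_gt0 k : 0 < qpow k.
Proof. by apply: lt_0_INR; apply/ltP; apply: expq_gt0. Qed.

Lemma qpowD k j : qpow (k + j) = qpow k * qpow j.
Proof. by rewrite /qpow expnD mult_INR. Qed.

Lemma INR_lt_qpow k : INR k < qpow k.
Proof. by apply: lt_INR; apply/ltP; apply: ltn_expl; lia. Qed.

Definition bias k := (INR (zeros k false) - INR (zeros k true)) / qpow k.

Lemma INR_zerosD k j b :
  INR (zeros (k + j) b) =
  INR (zeros k false) * INR (zeros j b) + INR (zeros k true) * (qpow j - INR (zeros j b)).
Proof.
have [H1 H2] := occ_iterD k j [:: false] b.
rewrite /= subnn muln0 !addn0 in H1 H2.
have -> : zeros (k + j) b =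
    (zeros k false * zeros j b + zeros k true * (expn q j - zeros j b))%nat.
  by apply/eqP; rewrite eqn_leq H1 H2.
by rewrite plus_INR !mult_INR minus_INR //; apply/leP; apply: occ_iter_le.
Qed.

Lemma biasD k j : bias (k + j) = bias k * bias j.
Proof.
rewrite /bias qpowD !INR_zerosD.
by have := qpow_gt0 k; have := qpow_gt0 j; move=> ? ?; field; lra.
Qed.

Lemma bias0 : bias 0 = 1.
Proof. by rewrite /bias /qpow /zeros /occ_iter /occ /window /znth expn0 !big_nat1 /=; lra. Qed.

Lemma biasM n k : bias (n * k) = bias k ^ n.
Proof. by elim: n => [|n IH]; rewrite ?mul0n ?bias0 // mulSn biasD IH. Qed.

Lemma INR_zeros_bounds K b : (forall a c, c \in iter_subst z K [:: a]) ->
  1 <= INR (zeros K b) <= qpow K - 1.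
Proof.
move=> Hall.
have [r0 Hr0 E0] := nthP false (Hall b false).
have [r1 Hr1 E1] := nthP false (Hall b true).
rewrite (size_iter_subst1 z_const) in Hr0 Hr1.
have Z0 : (0 < zeros K b)%nat by rewrite zerosE (sum_nat_bool_gt0 Hr0) // /znth E0.
have Z1 := sum_nat_bool_gt0 (f := znth z K b) Hr1 E1.
have Z2 : (zeros K b + 1 <= expn q K)%nat.
  by rewrite zerosE -[X in (_ <= X)%nat](sum_nat_bool_compl (znth z K b)) leq_add2l.
split; first exact: (leq_INR Z0).
by have := leq_INR Z2; rewrite plus_INR /qpow /=; lra.
Qed.

Lemma bias_small : subst_primitive z -> forall eps, 0 < eps -> exists j, Rabs (bias j) < eps.
Proof.
move=> [K [_ Hall]] eps Heps.
have HK : Rabs (bias K) < 1.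
  have := INR_zeros_bounds false Hall; have := INR_zeros_bounds true Hall.
  have := qpow_gt0 K; rewrite /bias => HQ H1 H0.
  rewrite Rabs_div ?(Rabs_pos_eq (qpow K)); try lra.
  by apply/Rlt_div_l => //; rewrite Rmult_1_l; apply: Rabs_def1; lra.
have [N HN] := pow_lt_1_zero _ HK _ Heps.
by exists (N * K)%nat; rewrite biasM; apply: HN.
Qed.

End LetterFrequencies.

Local Open Scope R_scope.

Lemma is_lim_seq_inv_INR : is_lim_seq (fun n => / INR n) 0.
Proof. by have := is_lim_seq_inv _ _ is_lim_seq_INR; apply. Qed.

Lemma div_INR_small C eps :
  0 < eps -> exists N, (0 < N)%nat /\ forall n, (N <= n)%nat -> C / INR n < eps.
Proof.
move=> He; have [m [_ Hm]] := nfloor_ex (Rmax 0 (C / eps)) (Rmax_l _ _).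
exists m.+1; split => // n Hn.
have := leq_INR Hn; rewrite S_INR => Hmn.
have Hn0 : 0 < INR n by have := pos_INR m; lra.
apply/Rlt_div_l => //.
have : C / eps < INR n by have := Rmax_r 0 (C / eps); lra.
by move/(Rlt_div_l _ _ _ He); lra.
Qed.

Lemma div_INR_anti C m n : 0 <= C -> (0 < m <= n)%nat -> C / INR n <= C / INR m.
Proof.
move=> HC /andP [Hm Hmn]; apply: Rmult_le_compat_l => //.
by apply: Rinv_le_contravar; [apply: lt_0_INR; apply/ltP | apply: leq_INR].
Qed.

Lemma ex_lim_seq_cauchy_squeeze (u : nat -> R) :
  (forall eps, 0 < eps -> exists lo hi c, hi - lo < eps /\ 0 <= c /\
     forall n, (0 < n)%nat -> lo - c / INR n <= u n <= hi + c / INR n) ->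
  ex_lim_seq_cauchy u.
Proof.
move=> Hsq [eps He] /=.
have [lo [hi [c [Hlh [Hc Hu]]]]] := Hsq (eps / 2) ltac:(lra).
have [N [HN0 HN]] := @div_INR_small c (eps / 4) ltac:(lra).
have Hsmall n : (N <= n)%nat -> c / INR n < eps / 4.
  move=> Hn; apply: Rle_lt_trans (HN N (leqnn N)).
  by apply: div_INR_anti => //; rewrite HN0.
exists N => n m /leP Hn /leP Hm.
have := Hu n (leq_trans HN0 Hn); have := Hu m (leq_trans HN0 Hm).
have := Hsmall n Hn; have := Hsmall m Hm; have := Hc.
move=> *; apply: Rabs_def1; lra.
Qed.

Lemma block_ratio_lb (N M Q D c : R) : 0 < Q -> 0 < N -> 0 <= M ->
  M * Q <= N < (M + 1) * Q -> D <= Q -> M * D <= c -> D / Q - Q / N <= c / N.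
Proof.
move=> HQ HN HM [H1 H2] HD Hc.
have key : D * N - Q * Q <= c * Q.
  case: (Rle_lt_dec 0 D) => HD0; nra.
apply: (Rmult_le_reg_r (Q * N)); first nra.
have -> : (D / Q - Q / N) * (Q * N) = D * N - Q * Q by field; lra.
by have -> : c / N * (Q * N) = c * Q by field; lra.
Qed.

Lemma block_ratio_ub (N M Q E c : R) : 0 < Q -> 0 < N ->
  M * Q <= N -> 0 <= E -> c <= (M + 1) * E -> c / N <= E / Q + E / N.
Proof.
move=> HQ HN H1 HE Hc.
apply: (Rmult_le_reg_r (Q * N)); first nra.
have -> : (E / Q + E / N) * (Q * N) = E * N + E * Q by field; lra.
have -> : c / N * (Q * N) = c * Q by field; lra.
nra.
Qed.

Local Close Scope R_scope.

Definition occ_ratio (F : nat -> bool) w n := (INR (occ F w n) / INR n)%R.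

Definition freq (F : nat -> bool) w := real (Lim_seq (occ_ratio F w)).

Lemma occ_of_blocks (F : nat -> bool) w B :
  (forall t, exists i, t * B <= i < t.+1 * B /\ window F (size w) i = w) ->
  forall t, t <= occ F w (t * B).
Proof.
move=> Hocc; elim => [//|t IH].
have [i [/andP [Hi1 Hi2] Hw]] := Hocc t.
apply: leq_trans (occ_mono F w Hi2); rewrite occS Hw eqxx addn1 ltnS.
exact: leq_trans IH (occ_mono F w Hi1).
Qed.

Lemma occ_ratio_lim_lb (F : nat -> bool) w B (f : R) : 0 < B ->
  (forall t, t <= occ F w (t * B)) -> is_lim_seq (occ_ratio F w) f -> (/ INR B <= f)%R.
Proof.
move=> HB Hc Hf.
have HBR : (0 < INR B)%R by apply: lt_0_INR; apply/ltP.
have Hinv : is_lim_seq (fun n => / INR B - / INR n)%R (/ INR B - 0)%R.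
  apply: is_lim_seq_minus'; first exact: is_lim_seq_const.
  exact: is_lim_seq_inv_INR.
suff : Rbar_le (/ INR B - 0)%R f by move=> /= H; lra.
apply: (is_lim_seq_le_loc _ _ _ _ _ Hinv Hf); exists 1%nat => n /leP Hn.
have HnR : (0 < INR n)%R by apply: lt_0_INR; apply/ltP.
have HM := leq_INR (leq_trans (Hc (n %/ B)) (occ_mono F w (leq_divM n B))).
have HnM : (INR n < (INR (n %/ B) + 1) * INR B)%R.
  by rewrite -S_INR -mult_INR; apply: lt_INR; apply/ltP; apply: ltn_ceil.
rewrite /occ_ratio.
have -> : (/ INR B - / INR n = (INR n - INR B) / INR B / INR n)%R by field; lra.
apply: Rmult_le_compat_r; first by apply: Rlt_le; apply: Rinv_0_lt_compat.
by apply/Rle_div_l => //; nra.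
Qed.

Section FixedPointFrequencies.
Variables (z : subst) (q : nat) (x : nat -> bool).
Hypotheses (q_ge2 : 2 <= q) (z_const : constant_length z q).
Hypotheses (z_prim : subst_primitive z) (x_fp : is_fixed_point_limit z x).

Lemma occ_fixed_point_blocks k M w :
  occ x w (M * expn q k) <= \sum_(0 <= s < M) occ_iter z q k w (x s) + M * (size w - 1) /\
  \sum_(0 <= s < M) occ_iter z q k w (x s) <= occ x w (M * expn q k) + M * (size w - 1).
Proof. by apply: occ_blocks => s r _ Hr; apply: fixed_point_blocks. Qed.

Section WordBias.
Variable w : seq bool.
Let L := size w.
Let g k a := occ_iter z q k w a.

Local Open Scope R_scope.

Definition wbias k := (INR (g k false) - INR (g k true)) / qpow q k.

Lemma INR_occ_iter_bounds k a : 0 <= INR (g k a) <= qpow q k.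
Proof. by split; [apply: pos_INR | apply: leq_INR; apply: occ_iter_le]. Qed.

Lemma Rabs_wbias_le1 k : Rabs (wbias k) <= 1.
Proof.
have := INR_occ_iter_bounds k false; have := INR_occ_iter_bounds k true.
have := qpow_gt0 q_ge2 k; rewrite /wbias => HQ H1 H0.
rewrite Rabs_div ?(Rabs_pos_eq (qpow q k)); try lra.
by apply/Rle_div_l => //; rewrite Rmult_1_l; apply: Rabs_le; split; lra.
Qed.

(* Splitting [zeta^(k+j)(a)] into blocks [zeta^k(c)] makes [wbias] contract by
   the letter bias of [zeta^j], up to occurrences straddling two blocks. *)
Lemma Rabs_wbiasD k j : Rabs (wbias (k + j)) <= Rabs (bias z q j) + 2 * INR (L - 1) / qpow q k.
Proof.
pose e b := INR (g (k + j) b) - (INR (g k false) * INR (zeros z q j b) +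
      INR (g k true) * (qpow q j - INR (zeros z q j b))).
have He b : Rabs (e b) <= qpow q j * INR (L - 1).
  have [H1 H2] := occ_iterD z_const k j w b.
  have := Rabs_INR_sub_le H1 H2.
  by rewrite /e /g /qpow -mult_INR plus_INR !mult_INR minus_INR //; apply/leP; apply: occ_iter_le.
have HQk := qpow_gt0 q_ge2 k; have HQj := qpow_gt0 q_ge2 j.
have -> : wbias (k + j) = wbias k * bias z q j + (e false - e true) / (qpow q k * qpow q j).
  by rewrite /wbias /bias /e qpowD; field; lra.
apply: Rle_trans (Rabs_triang _ _) (Rplus_le_compat _ _ _ _ _ _).
  rewrite Rabs_mult -[X in _ <= X]Rmult_1_l.
  by apply: Rmult_le_compat_r; [apply: Rabs_pos | apply: Rabs_wbias_le1].
rewrite Rabs_div ?(Rabs_pos_eq (_ * _)); try nra.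
apply/Rle_div_l; first nra.
have := He false; have := He true; have := Rabs_triang (e false) (- e true).
rewrite Rabs_Ropp => T1 T2 T3.
have -> : 2 * INR (L - 1) / qpow q k * (qpow q k * qpow q j) = 2 * (qpow q j * INR (L - 1)).
  by field; lra.
by rewrite /Rminus; lra.
Qed.

Lemma wbias_small eps : 0 < eps -> exists k, Rabs (wbias k) + 2 * INR (L - 1) / qpow q k < eps.
Proof.
move=> He; have He4 : 0 < eps / 4 by lra.
have [N [HN0 HN]] := div_INR_small (2 * INR (L - 1)) He4.
have [j Hj] := bias_small q_ge2 z_const z_prim He4.
have HC : 0 <= 2 * INR (L - 1) by have := pos_INR (L - 1); lra.
have Hsmall k : (N <= k)%nat -> 2 * INR (L - 1) / qpow q k < eps / 4.
  move=> Hk; apply: Rle_lt_trans (HN k Hk).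
  apply: Rmult_le_compat_l => //.
  apply: Rinv_le_contravar; last exact: Rlt_le (INR_lt_qpow q_ge2 k).
  by apply: lt_0_INR; apply/ltP; apply: leq_trans Hk.
exists (N + j)%nat.
have := Rabs_wbiasD N j; have := Hsmall N (leqnn N); have := Hsmall (N + j)%nat (leq_addr _ _).
lra.
Qed.

Definition freq_lo k := (INR (minn (g k false) (g k true)) - INR (L - 1)) / qpow q k.
Definition freq_hi k := (INR (maxn (g k false) (g k true)) + INR (L - 1)) / qpow q k.

Lemma freq_hi_lo k : freq_hi k - freq_lo k = Rabs (wbias k) + 2 * INR (L - 1) / qpow q k.
Proof.
have HQ := qpow_gt0 q_ge2 k.
rewrite /wbias Rabs_div ?(Rabs_pos_eq (qpow q k)); try lra.
by rewrite -INR_maxn_minn /freq_hi /freq_lo; field; lra.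
Qed.

Lemma occ_ratio_bounds k n : (0 < n)%nat ->
  let c := qpow q k + INR (L - 1) in
  freq_lo k - c / INR n <= occ_ratio x w n <= freq_hi k + c / INR n.
Proof.
move=> Hn c.
have HQ := qpow_gt0 q_ge2 k; have HnR : 0 < INR n by apply: lt_0_INR; apply/ltP.
have HL := pos_INR (L - 1).
set M := (n %/ expn q k)%nat.
have HMn : (M * expn q k <= n)%nat by apply: leq_divM.
have HnM : (n < M.+1 * expn q k)%nat by apply: ltn_ceil; apply: expq_gt0; lia.
have RMn : INR M * qpow q k <= INR n by rewrite /qpow -mult_INR; apply: leq_INR.
have RnM : INR n < (INR M + 1) * qpow q k.
  by rewrite /qpow -S_INR -mult_INR; apply: lt_INR; apply/ltP.
have [Hmin0 Hmin1] : 0 <= INR (minn (g k false) (g k true)) <= qpow q k.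
  by case: leqP => _; apply: INR_occ_iter_bounds.
have [Hmax0 Hmax1] : 0 <= INR (maxn (g k false) (g k true)) <= qpow q k.
  by case: leqP => _; apply: INR_occ_iter_bounds.
have Hc : c / INR n = qpow q k / INR n + INR (L - 1) / INR n by rewrite /c; field; lra.
split.
- apply: (Rle_trans _ (freq_lo k - qpow q k / INR n)).
    by rewrite Hc; have := Rdiv_le_0_compat _ _ HL HnR; lra.
  apply: (block_ratio_lb (M := INR M)) => //; try lra; first exact: pos_INR.
  have [_ Hlow] := occ_fixed_point_blocks k M w.
  have Hmin := sum_nat_bool_comp_ge (g k) x M.
  have := leq_INR (leq_trans Hmin (leq_trans Hlow (leq_add (occ_mono x w HMn) (leqnn _)))).
  by rewrite plus_INR !mult_INR -/L; lra.
- apply: (Rle_trans _ (freq_hi k + (INR (maxn (g k false) (g k true)) + INR (L - 1)) / INR n)).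
    rewrite /freq_hi; apply: (block_ratio_ub (M := INR M)) => //; first lra.
    have [Hup _] := occ_fixed_point_blocks k M.+1 w.
    have Hmax := sum_nat_bool_comp_le (g k) x M.+1.
    have := leq_INR (leq_trans (occ_mono x w (ltnW HnM)) (leq_trans Hup (leq_add Hmax (leqnn _)))).
    by rewrite plus_INR !mult_INR S_INR -/L; lra.
  apply: Rplus_le_compat_l; rewrite Hc -Rdiv_plus_distr.
  by apply: Rmult_le_compat_r; [apply: Rlt_le; apply: Rinv_0_lt_compat | lra].
Qed.

Lemma freq_lim : is_lim_seq (occ_ratio x w) (freq x w).
Proof.
have Hcauchy : ex_lim_seq_cauchy (occ_ratio x w).
  apply: ex_lim_seq_cauchy_squeeze => eps He.
  have [k Hk] := wbias_small He.
  exists (freq_lo k), (freq_hi k), (qpow q k + INR (L - 1)); split; first by rewrite freq_hi_lo.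
  split; last exact: occ_ratio_bounds.
  by have := qpow_gt0 q_ge2 k; have := pos_INR (L - 1); lra.
exact: Lim_seq_correct' (proj2 (ex_lim_seq_cauchy_corr _) Hcauchy).
Qed.

End WordBias.

(* Primitivity puts every letter, hence (after [k] more substitution steps)
   every factor of length [< q^k], into each block of [x] of length [q^(K+k)]. *)
Lemma window_in_every_block p L : exists B, (0 < B)%nat /\
  forall t, exists i, (t * B <= i < t.+1 * B)%nat /\ window x L i = window x L p.
Proof.
have [K [_ HK]] := z_prim.
set k := (p + L).+1.
have Hk : (p + L < expn q k)%nat by apply: ltn_trans (ltnSn _) (ltn_expl k q_ge2).
have HqK := expq_gt0 q_ge2 K; have Hqk := expq_gt0 q_ge2 k.
exists (expn q K * expn q k)%nat; split; first by rewrite muln_gt0 HqK Hqk.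
move=> t.
have [s Hs Es] := nthP false (HK (x t) (x 0%nat)).
rewrite (size_iter_subst1 z_const) in Hs.
exists ((t * expn q K + s) * expn q k + p)%nat; split.
  move: Hs Hk; set QK := expn q K; set Qk := expn q k => Hs Hk; apply/andP; nia.
apply: (@eq_from_nth _ false); rewrite !size_mkseq // => u Hu.
have Hpu : (p + u < expn q k)%nat by lia.
have x_pu : x (p + u)%nat = znth z k (x 0%nat) (p + u).
  by rewrite -(fixed_point_blocks z_const x_fp 0 Hpu) mul0n add0n.
rewrite !nth_mkseq // -addnA (fixed_point_blocks z_const x_fp _ Hpu).
by rewrite (fixed_point_blocks z_const x_fp t Hs) [znth z K _ _]Es x_pu.
Qed.

Lemma freq_window_gt0 p L : (0 < freq x (window x L p))%R.
Proof.
have [B [HB Hblocks]] := window_in_every_block p L.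
have HBR : (0 < INR B)%R by apply: lt_0_INR; apply/ltP.
have Hocc : forall t, (t <= occ x (window x L p) (t * B))%nat.
  by apply: occ_of_blocks => t; rewrite size_mkseq; apply: Hblocks.
have := occ_ratio_lim_lb HB Hocc (@freq_lim (window x L p)).
by have := Rinv_0_lt_compat _ HBR; lra.
Qed.

End FixedPointFrequencies.

Section WindowPairs.
Variable x : nat -> bool.

Definition window_tuple L i : L.-tuple bool :=
  Tuple (introT eqP (size_mkseq (fun u => x (i + u)) L)).

Lemma sum_window_tuple L m (f : L.-tuple bool -> nat) :
  \sum_(i < m) f (window_tuple L i) = \sum_(u : L.-tuple bool) f u * occ x u m.
Proof.
have occE (u : L.-tuple bool) : occ x u m = \sum_(i < m) (window_tuple L i == u).
  by rewrite /occ big_mkord size_tuple.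
under [RHS]eq_bigr => u _ do rewrite occE big_distrr /=.
rewrite exchange_big /=; apply: eq_bigr => i _.
rewrite (bigD1 (window_tuple L i)) //= eqxx muln1 big1 ?addn0 // => u /negbTE Hu.
by rewrite eq_sym Hu muln0.
Qed.

Lemma sum_window_pairs L m (P : seq bool -> seq bool -> bool) :
  \sum_(i < m) \sum_(j < m) P (window x L i) (window x L j) =
  \sum_(u : L.-tuple bool) \sum_(v : L.-tuple bool) P u v * occ x u m * occ x v m.
Proof.
rewrite (sum_window_tuple m (fun u => \sum_(j < m) P u (window_tuple L j))).
apply: eq_bigr => u _; rewrite (sum_window_tuple m (fun v => P u v)) big_distrl /=.
by apply: eq_bigr => v _; rewrite mulnAC.
Qed.

End WindowPairs.

Lemma all_iotaS (P : pred nat) l : all P (seq.iota 0 l.+1) = all P (seq.iota 0 l) && P l.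
Proof. by rewrite -addn1 iotaD all_cat /= andbT. Qed.

Section Runs.
Variable x : nat -> bool.

Definition run_start l i j :=
  [&& 0 < i, 0 < j, i != j, all (fun k => rp x (i + k) (j + k)) (seq.iota 0 l) & ~~ rp x i.-1 j.-1].

Definition runs l n := \sum_(i < n) \sum_(j < n) run_start l i j.

Definition branch l (u v : seq bool) :=
  (nth false u 0 != nth false v 0) &&
  all (fun k => nth false u k.+1 == nth false v k.+1) (seq.iota 0 l).

Lemma run_startS l i j : run_start l.+1 i j = run_start l i j && rp x (i + l) (j + l).
Proof.
rewrite /run_start all_iotaS.
by case: (0 < i); case: (0 < j); case: (i != j); case: all; case: rp; case: rp.
Qed.

Lemma run_start_leS l i j : run_start l.+1 i j <= run_start l i j.
Proof. by rewrite run_startS; case: (run_start l i j); case: rp. Qed.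

Lemma in_K_run_start l i j : in_K x l i j = run_start l i j - run_start l.+1 i j :> nat.
Proof.
rewrite run_startS /in_K /run_start.
by case: (0 < i); case: (0 < j); case: (i != j); case: all; case: (rp x i.-1 j.-1); case: rp.
Qed.

Lemma runs_leS l n : runs l.+1 n <= runs l n.
Proof. by apply: leq_sum => i _; apply: leq_sum => j _; apply: run_start_leS. Qed.

Lemma sum_in_K l n : \sum_(i < n) \sum_(j < n) in_K x l i j = runs l n - runs l.+1 n.
Proof.
rewrite /runs -sumnB => [|i _]; last by apply: leq_sum => j _; apply: run_start_leS.
apply: eq_bigr => i _; rewrite -sumnB => [|j _]; last exact: run_start_leS.
by apply: eq_bigr => j _; rewrite in_K_run_start.
Qed.

Lemma run_start_branch l i j :
  run_start l i j = [&& 0 < i, 0 < j & branch l (window x l.+1 i.-1) (window x l.+1 j.-1)].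
Proof.
case: i => [//|i]; case: j => [//|j]; rewrite /run_start /branch /= !addn0.
have -> : all (fun k => nth false [seq x (i + u) | u <- seq.iota 1 l] k ==
                        nth false [seq x (j + u) | u <- seq.iota 1 l] k) (seq.iota 0 l)
        = all (fun k => rp x (i.+1 + k) (j.+1 + k)) (seq.iota 0 l).
  apply: eq_in_all => k; rewrite mem_iota add0n => Hk.
  by rewrite !(nth_map 0) ?size_iota // nth_iota // /rp !addnA !addn1 !addSn.
rewrite /rp eqSS; case: (x i =P x j) => Hx /=; first by rewrite !andbF.
by rewrite !andbT; case: (i =P j) => [Hij|//]; rewrite Hij in Hx.
Qed.

Lemma runs_branch l n :
  runs l n = \sum_(i < n.-1) \sum_(j < n.-1) branch l (window x l.+1 i) (window x l.+1 j).
Proof.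
case: n => [|m]; first by rewrite /runs !big_ord0.
rewrite /runs big_ord_recl big1 => [|j _]; last by rewrite run_start_branch.
rewrite add0n; apply: eq_bigr => i _.
by rewrite big_ord_recl run_start_branch add0n; apply: eq_bigr => j _; rewrite run_start_branch.
Qed.

Definition line_start n l i j :=
  [&& i <= n - l, j <= n - l, l <= n, i != j,
      all (fun k => rp x (i + k) (j + k)) (seq.iota 0 l) & (0 < minn i j) ==> ~~ rp x i.-1 j.-1].

Definition lines_ge n l := \sum_(i < n) \sum_(j < n) line_start n l i j.

Lemma is_line_start n l i j : is_line x n i j l = line_start n l i j && ~~ line_start n l.+1 i j.
Proof.
rewrite /is_line /line_start all_iotaS.
have -> : (maxn i j < n - l) = [&& i <= n - l.+1, j <= n - l.+1 & l < n] by apply/idP/idP; lia.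
by case: (i <= n - l); case: (j <= n - l); case: (l <= n); case: (i != j);
  case: all; case: (_ ==> _); case: (i <= n - l.+1); case: (j <= n - l.+1);
  case: (l < n); case: (rp x (i + l) (j + l)).
Qed.

Lemma line_start_leS n l i j : line_start n l.+1 i j <= line_start n l i j.
Proof.
case: (boolP (line_start n l.+1 i j)) => // /and5P [Hi Hj Hln Hij].
rewrite all_iotaS => /andP [/andP [Hall _] Hleft].
rewrite /line_start Hij Hall Hleft !andbT.
by have [-> -> ->] : [/\ i <= n - l, j <= n - l & l <= n] by split; lia.
Qed.

Lemma N_lines_ge n l : N_lines x n l = lines_ge n l - lines_ge n l.+1.
Proof.
rewrite /N_lines /lines_ge -sumnB => [|i _]; last by apply: leq_sum => j _; apply: line_start_leS.
apply: eq_bigr => i _; rewrite -sumnB => [|j _]; last exact: line_start_leS.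
apply: eq_bigr => j _; rewrite is_line_start.
by have := line_start_leS n l i j; case: line_start; case: line_start.
Qed.

Lemma lines_ge_leS n l : lines_ge n l.+1 <= lines_ge n l.
Proof. by apply: leq_sum => i _; apply: leq_sum => j _; apply: line_start_leS. Qed.

Lemma lines_ge_eq0 n l : n < l -> lines_ge n l = 0.
Proof.
move=> Hnl; rewrite /lines_ge big1 // => i _; rewrite big1 // => j _.
by rewrite /line_start (leqNgt l n) Hnl !andbF.
Qed.

Lemma line_start_run_start n l i j :
  [&& 0 < i, 0 < j, i <= n - l & j <= n - l] -> line_start n l i j = run_start l i j.
Proof.
move=> /and4P [Hi Hj Hin Hjn].
have Hln : l <= n by lia.
have Hmin : 0 < minn i j by lia.
by rewrite /line_start /run_start Hi Hj Hin Hjn Hln Hmin /=; case: (i != j); case: all; case: rp.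
Qed.

Definition on_border n l i j := (i == 0) + (j == 0) + (n - l < i) + (n - l < j).

Lemma line_start_run_start_close n l i j :
  line_start n l i j <= run_start l i j + on_border n l i j /\
  run_start l i j <= line_start n l i j + on_border n l i j.
Proof.
case: (boolP [&& 0 < i, 0 < j, i <= n - l & j <= n - l]) => H.
  by rewrite line_start_run_start // !leq_addr.
have Hb : 0 < on_border n l i j.
  rewrite lt0n; apply: contraNneq H; rewrite /on_border => /eqP.
  by rewrite !addn_eq0 !eqb0 -!leqNgt -!lt0n => /andP [/andP [/andP [-> ->] ->] ->].
by case: line_start; case: run_start; split; lia.
Qed.

Lemma sum_on_border n l : \sum_(i < n) \sum_(j < n) on_border n l i j <= 2 * n * (1 + l).
Proof.
pose a (i : nat) := (i == 0) + (n - l < i).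
have Ha : \sum_(i < n) a i <= 1 + l.
  rewrite big_split /=; apply: leq_add.
    by case: (n) => [|m]; rewrite ?big_ord0 // big_ord_recl big1.
  rewrite -(big_mkord xpredT (fun i => (n - l < i) : nat)).
  rewrite (big_cat_nat (leq0n (n - l)) (leq_subr l n)) /= big_nat big1 => [|i /andP [_ Hi]].
    by rewrite add0n; apply: leq_trans (sum_nat_bool_le (fun i => n - l < i) _ _) _; lia.
  by rewrite ltnNge ltnW.
have -> : \sum_(i < n) \sum_(j < n) on_border n l i j = 2 * n * \sum_(i < n) a i.
  rewrite (eq_bigr (fun i : 'I_n => \sum_(j < n) (a i + a j))) => [|i _]; last first.
    by apply: eq_bigr => j _; rewrite /on_border /a; lia.
  under eq_bigr => i _ do rewrite big_split /= sum_nat_const card_ord.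
  by rewrite big_split /= sum_nat_const card_ord -big_distrr /=; lia.
by rewrite leq_mul2l Ha orbT.
Qed.

Lemma lines_ge_runs_close n l :
  (Rabs (INR (lines_ge n l) - INR (runs l n)) <= INR (2 * n * (1 + l)))%R.
Proof.
have [H1 H2] : lines_ge n l <= runs l n + 2 * n * (1 + l) /\
               runs l n <= lines_ge n l + 2 * n * (1 + l).
  by split; apply: leq_trans (leq_add (leqnn _) (sum_on_border n l));
    rewrite -big_split; apply: leq_sum => i _; rewrite -big_split; apply: leq_sum => j _;
    have [] := line_start_run_start_close n l i j.
exact: Rabs_INR_sub_le H1 H2.
Qed.

End Runs.

Section RunPacking.
Variable x : nat -> bool.

(* Run starts are preceded by a mismatch, so the first [L] cells of distinct
   runs of length at least [L] on a common diagonal cannot overlap. *)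
Lemma run_start_cell_inj L i1 j1 i2 j2 k1 k2 :
  run_start x L i1 j1 -> run_start x L i2 j2 -> k1 < L -> k2 < L ->
  i1 + k1 = i2 + k2 -> j1 + k1 = j2 + k2 -> k1 = k2.
Proof.
wlog Hk : i1 j1 i2 j2 k1 k2 / k1 <= k2.
  move=> W H1 H2 Hk1 Hk2 E1 E2; case: (leqP k1 k2) => H; first exact: (W i1 j1 i2 j2).
  by symmetry; apply: (W i2 j2 i1 j1) => //; apply: ltnW.
move=> H1 H2 Hk1 Hk2 E1 E2; case: (ltngtP k1 k2) => // Hlt; last by move: Hk; rewrite leqNgt Hlt.
move: H1 H2 => /and5P [Hi1 Hj1 _ _ Hmis] /and5P [_ _ _ Hall _].
have Hm : (k2 - k1).-1 \in seq.iota 0 L by rewrite mem_iota; lia.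
have := allP Hall _ Hm.
have -> : i2 + (k2 - k1).-1 = i1.-1 by lia.
have -> : j2 + (k2 - k1).-1 = j1.-1 by lia.
by move=> H; rewrite H in Hmis.
Qed.

Lemma card_run_cells n L :
  #|[pred p : 'I_n * 'I_n * 'I_L | run_start x L p.1.1 p.1.2]| = L * runs x L n.
Proof.
pose F (ij : 'I_n * 'I_n) (k : 'I_L) := (run_start x L ij.1 ij.2 : nat).
rewrite -sum1_card big_mkcond /=.
rewrite (eq_bigr (fun p => F p.1 p.2)) => [|p _]; last first.
  by rewrite inE /F; case: (run_start x L p.1.1 p.1.2).
rewrite -(pair_bigA _ F) /=.
rewrite (eq_bigr (fun ij : 'I_n * 'I_n => L * run_start x L ij.1 ij.2)) => [|ij _];
  last by rewrite sum_nat_const card_ord.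
rewrite -(pair_bigA _ (fun i j : 'I_n => L * run_start x L i j)) /= /runs big_distrr.
by apply: eq_bigr => i _; rewrite big_distrr.
Qed.

Lemma lt_add_ord n L (i : 'I_n) (k : 'I_L) : i + k < n + L.
Proof. by have := ltn_ord i; have := ltn_ord k; lia. Qed.

Lemma runs_packing n L : L * runs x L n <= (n + L) * (n + L).
Proof.
rewrite -card_run_cells.
have -> : (n + L) * (n + L) = #|{: 'I_(n + L) * 'I_(n + L)}| by rewrite card_prod card_ord.
pose cell (p : 'I_n * 'I_n * 'I_L) : 'I_(n + L) * 'I_(n + L) :=
  (Ordinal (lt_add_ord p.1.1 p.2), Ordinal (lt_add_ord p.1.2 p.2)).
apply: (@leq_card_in _ _ cell) => [[[i1 j1] k1] [[i2 j2] k2]]; rewrite !inE /= => H1 H2 [E1 E2].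
have Hk : nat_of_ord k1 = k2 by apply: (run_start_cell_inj H1 H2 (ltn_ord k1) (ltn_ord k2) E1 E2).
have Hi : nat_of_ord i1 = i2 by lia.
have Hj : nat_of_ord j1 = j2 by lia.
by congr (_, _, _); apply: val_inj.
Qed.

End RunPacking.

Definition agree (x : nat -> bool) m a b := forall k, k < m -> x (a + k) = x (b + k).

Definition eventually_periodic (x : nat -> bool) :=
  exists p N, 0 < p /\ forall t, N <= t -> x (t + p) = x t.

(* Infinite pigeonhole over the finitely many candidates [d <= D]. *)
Lemma bounded_witness_forall (Q : nat -> nat -> Prop) D :
  (forall d T T', T' <= T -> Q d T -> Q d T') ->
  (forall T, exists2 d, d <= D & Q d T) -> exists2 d, d <= D & forall T, Q d T.
Proof.
move=> Qdown; elim: D => [|D IH] HQ.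
  by exists 0 => // T; have [d Hd HdT] := HQ T; move: Hd HdT; rewrite leqn0 => /eqP ->.
case: (classic (forall T, Q D.+1 T)) => [|/not_all_ex_not [T0 HT0]]; first by exists D.+1.
have [d Hd HdT] : exists2 d, d <= D & forall T, Q d T.
  apply: IH => T; have [d Hd HdT] := HQ (maxn T T0).
  case: (ltngtP d D.+1) => [Hlt | Hgt | Heq]; last first.
  - by exfalso; apply: HT0; apply: Qdown (leq_maxr T T0) _; rewrite -Heq.
  - by move: Hd; rewrite leqNgt Hgt.
  - by exists d => //; apply: Qdown (leq_maxl T T0) HdT.
by exists d => //; apply: leqW.
Qed.

Section NoLeftSpecial.
Variables (x : nat -> bool) (m : nat).
Hypothesis m_gt0 : 0 < m.
Hypothesis no_left_special : forall a b, agree x m a.+1 b.+1 -> x a = x b.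

Lemma agree_pred a b : agree x m a.+1 b.+1 -> agree x m a b.
Proof.
move=> H [|k] Hk; first by rewrite !addn0; apply: no_left_special.
by have := H k (ltnW Hk); rewrite !addSn !addnS.
Qed.

Lemma agree_subn s a b : agree x m (a + s) (b + s) -> agree x m a b.
Proof.
elim: s a b => [|s IH] a b; first by rewrite !addn0.
by rewrite !addnS => H; apply: IH; apply: agree_pred.
Qed.

Lemma periodic_before a d : agree x m a (a + d) -> forall t, t <= a -> x t = x (t + d).
Proof.
move=> H t Ht.
have H' : agree x m (t + (a - t)) (t + d + (a - t)).
  by rewrite subnKC // -addnA [d + _]addnC addnA subnKC.
by have := agree_subn H' m_gt0; rewrite !addn0.
Qed.

(* Two equal windows among [2^m + 1] consecutive ones propagate backwards. *)
Lemma periodic_prefix T : exists2 d, d <= expn 2 m & 0 < d /\ forall t, t <= T -> x t = x (t + d).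
Proof.
pose f (i : 'I_(expn 2 m).+1) : m.-tuple bool := window_tuple x m (T + i).
have /injectivePn [i [j Hij Hf]] : ~~ injectiveb f.
  apply/negP => /injectiveP /leq_card; rewrite card_ord card_tuple card_bool.
  by rewrite ltnn.
wlog Hlt : i j Hij Hf / i < j.
  move=> W; case: (ltngtP i j) => H; first exact: (W i j).
    by apply: (W j i) => //; rewrite eq_sym.
  by move: Hij; rewrite -val_eqE /= H eqxx.
exists (j - i); first by have := ltn_ord j; lia.
split; first by rewrite subn_gt0.
have Hag : agree x m (T + i) (T + i + (j - i)).
  move=> k Hk; have := congr1 (fun s : m.-tuple bool => nth false s k) Hf.
  by rewrite /= !nth_mkseq // (_ : T + i + (j - i) = T + j) //; lia.
by move=> t Ht; apply: (periodic_before Hag); lia.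
Qed.

Lemma periodic_of_no_left_special : eventually_periodic x.
Proof.
pose Q d T := 0 < d /\ forall t, t <= T -> x t = x (t + d).
have Qdown d T T' : T' <= T -> Q d T -> Q d T'.
  by move=> HT [Hd H]; split => // t Ht; apply: H; apply: leq_trans HT.
have [d _ HQ] := bounded_witness_forall Qdown periodic_prefix.
have [Hd _] := HQ 0.
by exists d, 0; split => // t _; have [_ H] := HQ t; rewrite (H t (leqnn t)).
Qed.

End NoLeftSpecial.

Lemma eventually_periodic_shift x a d :
  0 < d -> (forall k, x (a + k) = x (a + d + k)) -> eventually_periodic x.
Proof.
move=> Hd Hsh; exists d, a; split => // t Ht.
by have := Hsh (t - a); rewrite -addnA [d + _]addnC addnA subnKC.
Qed.

Section NotEventuallyPeriodic.
Variable x : nat -> bool.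
Hypothesis x_aper : ~ eventually_periodic x.

Lemma left_special_exists m : 0 < m -> exists a b, x a != x b /\ agree x m a.+1 b.+1.
Proof.
move=> Hm; apply: NNPP => Hno; apply/x_aper/(periodic_of_no_left_special Hm) => a b Hag.
by apply/eqP/negPn/negP => Hab; apply: Hno; exists a, b.
Qed.

Lemma bispecial_exists m : exists a b l,
  m <= l /\ x a != x b /\ agree x l a.+1 b.+1 /\ x (a.+1 + l) != x (b.+1 + l).
Proof.
have [a [b [Hab Hag]]] := left_special_exists (ltn0Sn m).
have Hmis : exists k, x (a.+1 + k) != x (b.+1 + k).
  apply: NNPP => Hall; apply: x_aper.
  have Hall' k : x (a.+1 + k) = x (b.+1 + k).
    by apply/eqP/negPn/negP => Hk; apply: Hall; exists k.
  case: (ltngtP a b) => Hab'; last by move: Hab; rewrite Hab' eqxx.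
    apply: (@eventually_periodic_shift x a.+1 (b - a)) => [|k]; first lia.
    by rewrite Hall'; congr x; lia.
  apply: (@eventually_periodic_shift x b.+1 (a - b)) => [|k]; first lia.
  by rewrite -Hall'; congr x; lia.
exists a, b, (ex_minn Hmis).
case: ex_minnP => l Hl Hmin; split; last split => //; last split => // k Hk.
  rewrite leqNgt; apply/negP => Hlm.
  by move: Hl; rewrite Hag ?eqxx //; apply: leq_trans Hlm _.
by apply/eqP/negPn/negP => Hk'; have := Hmin k Hk'; rewrite leqNgt Hk.
Qed.

End NotEventuallyPeriodic.

(* A word of the subshift occurs in [zeta^k(a)], and by primitivity [a] occurs in
   every [zeta^K(x_t)]; hence every factor of [y] occurs in [x] arbitrarily far
   out, and an eventual period of [x] would be a period of [y]. *)
Lemma fixed_point_not_eventually_periodic z q x : 0 < q ->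
  constant_length z q -> is_fixed_point_limit z x -> subst_primitive z ->
  subst_aperiodic z -> ~ eventually_periodic x.
Proof.
move=> q_gt0 z_const x_fp [K [_ HK]] [y [Hy Hny]] [p [N [Hp Hper]]].
apply: Hny; exists p; split => // t.
have [k [a /infixP [s1 [s2 E]]]] := Hy t p.+1.
set w := mkseq (fun s => y (t + s)) p.+1 in E.
have Hw s : s <= p -> nth false w s = y (t + s) by move=> Hs; rewrite nth_mkseq.
have Hwsz : size w = p.+1 by rewrite size_mkseq.
clearbody w.
have [s0 Hs0 Es0] := nthP false (HK (x N) a).
rewrite (size_iter_subst1 z_const) in Hs0.
have Hsz : size s1 + p.+1 + size s2 = expn q k.
  by rewrite -(size_iter_subst1 z_const k a) E !size_cat Hwsz addnA.
set P0 := (N * expn q K + s0) * expn q k + size s1.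
have Hocc s : s <= p -> x (P0 + s) = y (t + s).
  move=> Hs; rewrite /P0 -addnA (fixed_point_blocks z_const x_fp); last by lia.
  rewrite (fixed_point_blocks z_const x_fp N Hs0) [znth z K _ _]Es0 /znth E.
  by rewrite nth_cat ltnNge leq_addr /= addKn nth_cat Hwsz ltnS Hs Hw.
have HP0 : N <= P0.
  have HqK : 0 < expn q K by rewrite expn_gt0 q_gt0.
  have Hqk : 0 < expn q k by rewrite expn_gt0 q_gt0.
  apply: leq_trans (leq_pmulr N HqK) _; apply: leq_trans (leq_addr s0 _) _.
  by apply: leq_trans (leq_pmulr _ Hqk) _; apply: leq_addr.
by rewrite -(Hocc p (leqnn p)) Hper // -[P0]addn0 Hocc // addn0.
Qed.

Local Open Scope R_scope.

Lemma sum_n_telescope (a : nat -> R) N : sum_n (fun k => a k - a k.+1) N = a 0%nat - a N.+1.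
Proof. by elim: N => [|N IH]; [rewrite sum_O | rewrite sum_Sn IH /plus /=; lra]. Qed.

Lemma rqa_Lambda_lines_ge x n l : rqa_Lambda x n l = INR (lines_ge x n l) / INR (n * n - n).
Proof.
pose a k := INR (lines_ge x n (l + k)) / INR (n * n - n).
have E k : rqa_lambda x n (l + k) = a k - a k.+1.
  rewrite /rqa_lambda N_lines_ge minus_INR; last by apply/leP; apply: lines_ge_leS.
  by rewrite /a addnS /Rdiv Rmult_minus_distr_r.
rewrite /rqa_Lambda (sum_n_ext _ _ _ E) sum_n_telescope /a addn0.
rewrite (@lines_ge_eq0 x n (l + n.+1)); last by lia.
by rewrite /Rdiv Rmult_0_l Rminus_0_r.
Qed.

Lemma rqa_lambda_lines_ge x n l :
  rqa_lambda x n l =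
  INR (lines_ge x n l) / INR (n * n - n) - INR (lines_ge x n l.+1) / INR (n * n - n).
Proof.
rewrite /rqa_lambda N_lines_ge minus_INR; last by apply/leP; apply: lines_ge_leS.
by rewrite /Rdiv Rmult_minus_distr_r.
Qed.

Lemma is_lim_seq_inv_INR_pred : is_lim_seq (fun n => / INR n.-1) 0.
Proof. by apply/is_lim_seq_incr_1; exact: is_lim_seq_inv_INR. Qed.

Lemma is_lim_seq_inv_INR_S : is_lim_seq (fun n => / INR n.+1) 0.
Proof. exact: (proj1 (is_lim_seq_incr_1 _ _) is_lim_seq_inv_INR). Qed.

Lemma is_lim_seq_big (I : Type) (r : seq I) (g : nat -> I -> R) (L : I -> R) :
  (forall i, is_lim_seq (fun n => g n i) (L i)) ->
  is_lim_seq (fun n => \big[Rplus/0]_(i <- r) g n i) (\big[Rplus/0]_(i <- r) L i).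
Proof.
move=> H; elim: r => [|i r IH].
  by rewrite big_nil; apply: is_lim_seq_ext (is_lim_seq_const 0) => n; rewrite big_nil.
rewrite big_cons; apply: is_lim_seq_ext (is_lim_seq_plus' _ _ _ _ (H i) IH) => n.
by rewrite big_cons.
Qed.

Lemma INR_sum (I : Type) (r : seq I) (F : I -> nat) :
  INR (\sum_(i <- r) F i) = \big[Rplus/0]_(i <- r) INR (F i).
Proof. exact: (big_morph INR plus_INR). Qed.

Lemma big_Rdiv (I : Type) (r : seq I) (F : I -> R) D :
  (\big[Rplus/0]_(i <- r) F i) / D = \big[Rplus/0]_(i <- r) (F i / D).
Proof. by apply: (big_morph (fun t => t / D)) => [a b|]; rewrite /Rdiv; lra. Qed.

Lemma is_lim_seq_offdiag (a b : nat -> R) (S C : R) :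
  is_lim_seq (fun n => a n / INR (n * n)) S -> (forall n, Rabs (b n - a n) <= C * INR n) ->
  is_lim_seq (fun n => b n / INR (n * n - n)) S.
Proof.
move=> Ha Hb.
have E : eventually (fun n => (a n / INR (n * n)) * (1 + / INR n.-1) +
                              (b n - a n) * (/ INR n.-1 / INR n) = b n / INR (n * n - n)).
  exists 2%nat => n /leP Hn.
  rewrite (_ : (n * n - n = n * n.-1)%nat); last by rewrite -subn1 mulnBr muln1.
  have Hn1 : 1 <= INR n.-1 by apply: (leq_INR (m := 1)); lia.
  rewrite !mult_INR (_ : INR n = INR n.-1 + 1); last by rewrite -S_INR prednK //; lia.
  by field; lra.
apply: is_lim_seq_ext_loc E _.
rewrite (_ : S = S * (1 + 0) + 0); last by ring.
apply: is_lim_seq_plus'.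
  apply: is_lim_seq_mult' Ha _.
  by apply: is_lim_seq_plus'; [exact: is_lim_seq_const | exact: is_lim_seq_inv_INR_pred].
apply/is_lim_seq_abs_0.
apply: (is_lim_seq_le_le_loc (fun _ => 0) _ (fun n => Rabs C * / INR n.-1)).
- exists 2%nat => n /leP Hn.
  have HnR : 0 < INR n by apply: lt_0_INR; apply/ltP; lia.
  have Hn1 : 0 < INR n.-1 by apply: lt_0_INR; apply/ltP; lia.
  split; first exact: Rabs_pos.
  rewrite Rabs_mult (Rabs_pos_eq (/ INR n.-1 / INR n)); last first.
    by apply: Rlt_le; apply: Rdiv_lt_0_compat => //; apply: Rinv_0_lt_compat.
  have -> : Rabs (b n - a n) * (/ INR n.-1 / INR n) = (Rabs (b n - a n) / INR n) * / INR n.-1.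
    by field; lra.
  apply: Rmult_le_compat_r; first by apply: Rlt_le; apply: Rinv_0_lt_compat.
  apply/Rle_div_l => //; apply: Rle_trans (Hb n) _.
  by apply: Rmult_le_compat_r; [lra | apply: Rle_abs].
- exact: is_lim_seq_const.
- rewrite -(Rmult_0_r (Rabs C)).
  exact: is_lim_seq_mult' (is_lim_seq_const _) is_lim_seq_inv_INR_pred.
Qed.

Lemma Rinv_INR_ge0 n : 0 <= / INR n.
Proof.
case: n => [|n]; first by rewrite Rinv_0; lra.
by apply/Rlt_le/Rinv_0_lt_compat/lt_0_INR; lia.
Qed.

Lemma div_INR_ge0 a b : 0 <= INR a / INR b.
Proof. exact: Rmult_le_pos (pos_INR a) (Rinv_INR_ge0 b). Qed.

Local Close Scope R_scope.

Section BispecialRuns.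
Variable x : nat -> bool.
Variables (l a b : nat).
Hypotheses (left_mis : x a != x b) (ab_agree : agree x l a.+1 b.+1).
Hypothesis right_mis : x (a.+1 + l) != x (b.+1 + l).

Lemma window_eq_at L i j : window x L i = window x L j -> forall s, s < L -> x (i + s) = x (j + s).
Proof. by move=> E s Hs; have := congr1 (fun w => nth false w s) E; rewrite !nth_mkseq. Qed.

Lemma in_K_of_bispecial i j : 0 < i -> 0 < j ->
  window x l.+2 i.-1 = window x l.+2 a -> window x l.+2 j.-1 = window x l.+2 b -> in_K x l i j.
Proof.
move=> Hi Hj /window_eq_at Ei /window_eq_at Ej.
have Ei0 : x i.-1 = x a by have := Ei 0 isT; rewrite !addn0.
have Ej0 : x j.-1 = x b by have := Ej 0 isT; rewrite !addn0.
have Eik k : k < l.+1 -> x (i + k) = x (a.+1 + k).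
  by move=> Hk; have := Ei k.+1 Hk; rewrite !addnS -!addSn prednK.
have Ejk k : k < l.+1 -> x (j + k) = x (b.+1 + k).
  by move=> Hk; have := Ej k.+1 Hk; rewrite !addnS -!addSn prednK.
rewrite /in_K Hi Hj /rp /=; apply/and4P; split.
- by apply/eqP => Hij; move: left_mis; rewrite -Ei0 -Ej0 Hij eqxx.
- by apply/allP => k; rewrite mem_iota add0n => /andP [_ Hk]; rewrite Eik ?Ejk ?ab_agree // ltnW.
- by rewrite Ei0 Ej0.
- by rewrite Eik // Ejk.
Qed.

Lemma occ_pred_eq w n :
  \sum_(i < n) ((0 < i) && (window x (size w) i.-1 == w) : nat) = occ x w n.-1.
Proof.
case: n => [|m]; first by rewrite big_ord0 /occ big_geq.
by rewrite big_ord_recl /= add0n /occ big_mkord.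
Qed.

Lemma occ_bispecial_le n :
  occ x (window x l.+2 a) n.-1 * occ x (window x l.+2 b) n.-1 <=
  \sum_(i < n) \sum_(j < n) in_K x l i j.
Proof.
rewrite -!occ_pred_eq !size_mkseq big_distrl /=; apply: leq_sum => i _.
rewrite big_distrr /=; apply: leq_sum => j _.
case: (boolP ((0 < i) && _)) => [/andP [Hi /eqP Ei]|]; last by rewrite mul0n.
case: (boolP ((0 < j) && _)) => [/andP [Hj /eqP Ej]|]; last by rewrite muln0.
by rewrite (in_K_of_bispecial Hi Hj Ei Ej).
Qed.

End BispecialRuns.

Unset Implicit Arguments.

Section RecurrenceQuantification.
Variables (z : subst) (q : nat) (x : nat -> bool).
Hypotheses (q_ge2 : 2 <= q) (z_const : constant_length z q).
Hypotheses (z_prim : subst_primitive z) (x_fp : is_fixed_point_limit z x).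

Local Open Scope R_scope.

Lemma occ_pred_ratio_lim u : is_lim_seq (fun n => INR (occ x u n.-1) / INR n) (freq x u).
Proof.
apply/is_lim_seq_incr_1 => /=.
have E n : occ_ratio x u n * (1 - / INR n.+1) = INR (occ x u n) / INR n.+1.
  case: n => [|n]; first by rewrite /occ_ratio /occ big_geq //= /Rdiv !Rmult_0_l.
  have H0 : 0 < INR n.+1 by apply: lt_0_INR; lia.
  by rewrite /occ_ratio (S_INR n.+1); field; lra.
apply: is_lim_seq_ext E _.
rewrite (_ : freq x u = freq x u * (1 - 0)); last by ring.
apply: is_lim_seq_mult' (freq_lim q_ge2 z_const z_prim x_fp (w := u)) _.
exact: is_lim_seq_minus' (is_lim_seq_const 1) is_lim_seq_inv_INR_S.
Qed.

Definition run_density l :=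
  \big[Rplus/0]_(u : l.+1.-tuple bool) \big[Rplus/0]_(v : l.+1.-tuple bool)
    (INR (branch l u v) * freq x u * freq x v).

Lemma runs_density_lim l : is_lim_seq (fun n => INR (runs x l n) / INR (n * n)) (run_density l).
Proof.
have E n : \big[Rplus/0]_(u : l.+1.-tuple bool) \big[Rplus/0]_(v : l.+1.-tuple bool)
    (INR (branch l u v) * (INR (occ x u n.-1) / INR n) * (INR (occ x v n.-1) / INR n))
    = INR (runs x l n) / INR (n * n).
  rewrite runs_branch sum_window_pairs [in RHS]INR_sum big_Rdiv; apply: eq_bigr => u _.
  rewrite [in RHS]INR_sum big_Rdiv; apply: eq_bigr => v _.
  by rewrite !mult_INR /Rdiv Rinv_mult; ring.
apply: is_lim_seq_ext E _.
apply: is_lim_seq_big => u; apply: is_lim_seq_big => v.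
apply: is_lim_seq_mult'; last exact: occ_pred_ratio_lim.
by apply: is_lim_seq_mult'; [exact: is_lim_seq_const | exact: occ_pred_ratio_lim].
Qed.

Lemma run_density_ge0 l : 0 <= run_density l.
Proof.
have := is_lim_seq_le (fun _ => 0) _ 0 (run_density l) (fun n => div_INR_ge0 _ _)
  (is_lim_seq_const 0) (runs_density_lim l).
by [].
Qed.

Lemma run_density_le_inv l : (0 < l)%nat -> run_density l <= / INR l.
Proof.
move=> Hl; have HlR : 0 < INR l by apply: lt_0_INR; apply/ltP.
pose v n := / INR l * ((1 + INR l * / INR n) * (1 + INR l * / INR n)).
have Hv : is_lim_seq v (/ INR l * ((1 + INR l * 0) * (1 + INR l * 0))).
  have L1 : is_lim_seq (fun n => 1 + INR l * / INR n) (1 + INR l * 0).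
    apply: is_lim_seq_plus' (is_lim_seq_const _) _.
    exact: is_lim_seq_mult' (is_lim_seq_const _) is_lim_seq_inv_INR.
  exact: is_lim_seq_mult' (is_lim_seq_const _) (is_lim_seq_mult' _ _ _ _ L1 L1).
suff : Rbar_le (run_density l) (/ INR l * ((1 + INR l * 0) * (1 + INR l * 0))).
  by rewrite /= !Rmult_0_r !Rplus_0_r !Rmult_1_r.
apply: (is_lim_seq_le_loc _ v _ _ _ (runs_density_lim l) Hv).
exists 1%nat => n /leP Hn.
have HnR : 0 < INR n by apply: lt_0_INR; apply/ltP.
have := leq_INR (runs_packing x n l); rewrite !mult_INR plus_INR => Hpack.
have -> : v n = (INR n + INR l) * (INR n + INR l) / INR l / (INR n * INR n).
  by rewrite /v; field; lra.
apply: Rmult_le_compat_r; first by apply: Rlt_le; apply: Rinv_0_lt_compat; nra.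
by apply/Rle_div_r => //; lra.
Qed.

Definition dens_K l := run_density l - run_density l.+1.

Lemma density_K_lim l : is_lim_seq (density_K x l) (dens_K l).
Proof.
have E n : INR (runs x l n) / INR (n * n) - INR (runs x l.+1 n) / INR (n * n) = density_K x l n.
  rewrite /density_K sum_in_K minus_INR; last by apply/leP; apply: runs_leS.
  by rewrite /Rdiv Rmult_minus_distr_r.
exact: is_lim_seq_ext E (is_lim_seq_minus' _ _ _ _ (runs_density_lim l) (runs_density_lim l.+1)).
Qed.

Lemma is_series_dens_K l : is_series (fun k => dens_K (l + k)) (run_density l).
Proof.
have E N : run_density l - run_density (l + N.+1) = sum_n (fun k => dens_K (l + k)) N.
  rewrite (sum_n_ext _ (fun k => run_density (l + k) - run_density (l + k.+1))).
    by rewrite sum_n_telescope addn0.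
  by move=> k; rewrite /dens_K addnS.
have Htail : is_lim_seq (fun N => run_density (l + N.+1)) 0.
  apply: (is_lim_seq_le_le (fun _ => 0) _ (fun N => / INR N.+1)) => [N||];
    last exact: is_lim_seq_inv_INR_S; last exact: is_lim_seq_const.
  split; first exact: run_density_ge0.
  have Hpos : (0 < l + N.+1)%nat by lia.
  apply: Rle_trans (run_density_le_inv _ Hpos) _.
  by apply: Rinv_le_contravar; [apply: lt_0_INR; lia | apply: leq_INR; lia].
rewrite /is_series -[run_density l]Rminus_0_r.
exact: is_lim_seq_ext E (is_lim_seq_minus' _ _ _ _ (is_lim_seq_const _) Htail).
Qed.

Lemma lines_ge_ratio_lim l :
  is_lim_seq (fun n => INR (lines_ge x n l) / INR (n * n - n)) (run_density l).
Proof.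
apply: (is_lim_seq_offdiag (C := 2 * (1 + INR l))) (runs_density_lim l) _ => n.
by have := lines_ge_runs_close x n l; rewrite !mult_INR plus_INR /=; lra.
Qed.

Lemma rqa_Lambda_lim l : is_lim_seq (fun n => rqa_Lambda x n l) (run_density l).
Proof.
exact: is_lim_seq_ext (fun n => esym (rqa_Lambda_lines_ge x n l)) (lines_ge_ratio_lim l).
Qed.

Lemma rqa_lambda_lim l : is_lim_seq (fun n => rqa_lambda x n l) (dens_K l).
Proof.
apply: is_lim_seq_ext (fun n => esym (rqa_lambda_lines_ge x n l)) _.
exact: is_lim_seq_minus' (lines_ge_ratio_lim l) (lines_ge_ratio_lim l.+1).
Qed.

Lemma dens_K_ge0 l : 0 <= dens_K l.
Proof.
apply: (is_lim_seq_le (fun _ => 0) _ 0 (dens_K l) _ (is_lim_seq_const 0) (density_K_lim l)).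
by move=> n; apply: div_INR_ge0.
Qed.

Lemma run_density_antimono l k : run_density (l + k) <= run_density l.
Proof.
elim: k => [|k IH]; first by rewrite addn0; lra.
by have := dens_K_ge0 (l + k); rewrite /dens_K addnS; lra.
Qed.

Lemma dens_K_gt0 l a b : x a != x b -> agree x l a.+1 b.+1 -> x (a.+1 + l) != x (b.+1 + l) ->
  0 < dens_K l.
Proof.
move=> Hab Hag Hend.
set u := window x l.+2 a; set v := window x l.+2 b.
have Hlim : is_lim_seq (fun n => INR (occ x u n.-1) / INR n * (INR (occ x v n.-1) / INR n))
                       (freq x u * freq x v).
  by apply: is_lim_seq_mult'; apply: occ_pred_ratio_lim.
have Hle : Rbar_le (freq x u * freq x v) (dens_K l).
  apply: (is_lim_seq_le _ _ _ _ _ Hlim (density_K_lim l)) => n.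
  rewrite /density_K (_ : _ * _ = INR (occ x u n.-1 * occ x v n.-1) / INR (n * n)).
    apply: Rmult_le_compat_r; first exact: Rinv_INR_ge0.
    exact: leq_INR (occ_bispecial_le Hab Hag Hend n).
  by rewrite !mult_INR /Rdiv Rinv_mult; ring.
have Pu : 0 < freq x u := freq_window_gt0 q_ge2 z_const z_prim x_fp a l.+2.
have Pv : 0 < freq x v := freq_window_gt0 q_ge2 z_const z_prim x_fp b l.+2.
by have := Rmult_lt_0_compat _ _ Pu Pv; rewrite /= in Hle; lra.
Qed.

End RecurrenceQuantification.

Theorem proposition3p7 (z : subst) (q : nat) (x : nat -> bool) :
  (2 <= q)%N ->
  constant_length z q ->
  subst_primitive z ->
  subst_aperiodic z ->
  nth true (z false) 0 = false ->
  is_fixed_point_limit z x ->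
  exists dK : nat -> R,
    (forall l : nat, (1 <= l)%N -> is_lim_seq (density_K x l) (dK l)) /\
    (forall l : nat, (1 <= l)%N ->
       is_lim_seq (fun n => rqa_lambda x n l) (dK l) /\
       exists S : R,
         is_series (fun k => dK (l + k)%N) S /\
         is_lim_seq (fun n => rqa_Lambda x n l) S /\
         (0 < S)%R) /\
    (forall m : nat, exists l : nat, (m <= l)%N /\ (0 < dK l)%R).
Proof.
(* [zeta(0)] starting with [0] only serves the existence of [x], which is given. *)
move=> q_ge2 z_const z_prim z_aper _ x_fp.
have x_aper := fixed_point_not_eventually_periodic (ltnW q_ge2) z_const x_fp z_prim z_aper.
have dens_K_pos m : exists l, (m <= l)%N /\ (0 < dens_K x l)%R.
  have [a [b [l [Hml [Hab [Hag Hend]]]]]] := bispecial_exists x_aper m.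
  by exists l; split => //; apply: (dens_K_gt0 z q x q_ge2 z_const z_prim x_fp l a b Hab Hag Hend).
exists (dens_K x); split.
  by move=> l _; apply: (density_K_lim z q x q_ge2 z_const z_prim x_fp).
split => // l _; split; first exact: (rqa_lambda_lim z q x q_ge2 z_const z_prim x_fp).
exists (run_density x l); split; first exact: (is_series_dens_K z q x q_ge2 z_const z_prim x_fp).
split; first exact: (rqa_Lambda_lim z q x q_ge2 z_const z_prim x_fp).
have [l' [Hll' Hpos]] := dens_K_pos l.
have := run_density_antimono z q x q_ge2 z_const z_prim x_fp l (l' - l).
have := run_density_ge0 z q x q_ge2 z_const z_prim x_fp l'.+1.
by rewrite subnKC // /dens_K in Hpos *; lra.
Qed.
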